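(* Let $\Theta\subseteq\mathbb R^p$ be a convex full-dimensional polytope with $\Theta\subseteq\Theta^*$, let $\epsilon_{\mathrm a}>0$ and $\epsilon_{\mathrm r}\ge0$, and let $\Delta=\{\delta\in\{0,1\}^m:\Theta^*_\delta\cap\Theta\neq\emptyset\}$. Let $\theta$ be an interior point of $\Theta$. Suppose $V^*$ is continuous at $\theta$ and there exists $\delta\in\Delta$ with $V^*_\delta(\theta)=V^*(\theta)$ such that $V^*_\delta$ is continuous at $\theta$. Then the overlap at $\theta$ is positive: there exists $\gamma>0$ such that for every $\theta'\in\mathbb R^p$ with $\|\theta'-\theta\|_2\le\gamma$, $$V^*_\delta(\theta')-V^*(\theta')\le\max\{\epsilon_{\mathrm a},\epsilon_{\mathrm r}V^*(\theta')\}.$$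
   Context: Let $p,n,m,d,l$ be positive integers and let $\mathcal K\subseteq\mathbb R^d$ be a convex cone that is a Cartesian product of convex cones. Let $f,g,h$ be functions on $\mathbb R^p\times\mathbb R^n\times\mathbb R^m$ with values in $\mathbb R$, $\mathbb R^l$, $\mathbb R^d$ respectively, such that for each fixed $\delta\in\{0,1\}^m$, $(\theta,x)\mapsto f(\theta,x,\delta)$ is jointly convex and $(\theta,x)\mapsto g(\theta,x,\delta)$, $h(\theta,x,\delta)$ are affine. For $\delta\in\{0,1\}^m$ and $\theta\in\mathbb R^p$, $V^*_\delta(\theta)\in\mathbb R\cup\{+\infty\}$ is the optimal value of: minimize $f(\theta,x,\delta)$ over $x\in\mathbb R^n$ subject to $g(\theta,x,\delta)=0$, $h(\theta,x,\delta)\in\mathcal K$ ($+\infty$ if infeasible); $\Theta^*_\delta$ is the set of $\theta$ where it is feasible. $V^*(\theta)=\min_{\delta\in\{0,1\}^m}V^*_\delta(\theta)$ is the optimal value of the mixed-integer problem (minimize jointly over $x$ and $\delta\in\{0,1\}^m$), and $\Theta^*=\bigcup_\delta\Theta^*_\delta$ is its feasible parameter set. A commutation $\delta$ is called $\epsilon$-suboptimal at $\theta$ if $V^*_\delta(\theta)-V^*(\theta)\le\max\{\epsilon_{\mathrm a},\epsilon_{\mathrm r}V^*(\theta)\}$. *)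

From HB Require Import structures.
From mathcomp Require Import all_boot all_order all_algebra.
From mathcomp Require Import all_classical all_reals all_analysis.
Set Implicit Arguments. Unset Strict Implicit. Unset Printing Implicit Defensive.
Import Order.TTheory GRing.Theory Num.Theory.
Import numFieldNormedType.Exports.
Local Open Scope classical_set_scope.
Local Open Scope ring_scope.

Section Defs.
Variable R : realType.

Definition binvec (m : nat) : set 'rV[R]_m :=
  [set δ | forall i, δ 0 i = 0 \/ δ 0 i = 1].

Definition norm2 (p : nat) (v : 'rV[R]_p) : R := Num.sqrt (\sum_(i < p) v 0 i ^+ 2).

Definition convex_cone (d : nat) (K : set 'rV[R]_d) : Prop :=
  (forall x y, K x -> K y -> K (x + y)) /\
  (forall (t : R) x, 0 <= t -> K x -> K (t *: x)).

Variables (p n m : nat).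

Definition jointly_convex (f : 'rV[R]_p -> 'rV[R]_n -> 'rV[R]_m -> R) : Prop :=
  forall δ, binvec δ ->
  forall θ1 θ2 x1 x2 (t : R), 0 <= t <= 1 ->
    f (t *: θ1 + (1 - t) *: θ2) (t *: x1 + (1 - t) *: x2) δ
      <= t * f θ1 x1 δ + (1 - t) * f θ2 x2 δ.

Definition jointly_affine (k : nat)
    (g : 'rV[R]_p -> 'rV[R]_n -> 'rV[R]_m -> 'rV[R]_k) : Prop :=
  forall δ, binvec δ ->
  exists (A : 'M[R]_(p, k)) (B : 'M[R]_(n, k)) (c : 'rV[R]_k),
    forall θ x, g θ x δ = θ *m A + x *m B + c.

Variables (l d : nat)
  (f : 'rV[R]_p -> 'rV[R]_n -> 'rV[R]_m -> R)
  (g : 'rV[R]_p -> 'rV[R]_n -> 'rV[R]_m -> 'rV[R]_l)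
  (h : 'rV[R]_p -> 'rV[R]_n -> 'rV[R]_m -> 'rV[R]_d)
  (K : set 'rV[R]_d).

Definition feasible (δ : 'rV[R]_m) (θ : 'rV[R]_p) (x : 'rV[R]_n) : Prop :=
  g θ x δ = 0 /\ K (h θ x δ).

(* optimal value of the convex subproblem for commutation δ (+oo if infeasible) *)
Definition Vdelta (δ : 'rV[R]_m) (θ : 'rV[R]_p) : \bar R :=
  ereal_inf [set (f θ x δ)%:E | x in [set x | feasible δ θ x]].

Definition Theta_delta (δ : 'rV[R]_m) : set 'rV[R]_p :=
  [set θ | exists x, feasible δ θ x].

Definition Vstar (θ : 'rV[R]_p) : \bar R :=
  ereal_inf [set Vdelta δ θ | δ in @binvec m].

Definition Theta_star : set 'rV[R]_p :=
  \bigcup_(δ in @binvec m) Theta_delta δ.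

Definition Delta (Θ : set 'rV[R]_p) : set 'rV[R]_m :=
  [set δ | binvec δ /\ (Theta_delta δ `&` Θ) !=set0].

End Defs.

Definition polytope (R : realType) (p : nat) (Θ : set 'rV[R]_p) : Prop :=
  exists (k : nat) (v : 'I_k -> 'rV[R]_p),
    Θ = [set θ | exists w : 'I_k -> R,
           (forall i, 0 <= w i) /\ \sum_(i < k) w i = 1 /\
           θ = \sum_(i < k) w i *: v i].

Definition full_dimensional (R : realType) (p : nat) (Θ : set 'rV[R]_p) : Prop :=
  (interior Θ) !=set0.

From HB Require Import structures.
From mathcomp Require Import all_boot all_order all_algebra.
From mathcomp Require Import all_classical all_reals all_analysis.
Import Order.TTheory GRing.Theory Num.Theory.
Import numFieldNormedType.Exports.
Local Open Scope classical_set_scope.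
Local Open Scope ring_scope.

(* At an interior point θ the value V*(θ) is finite: it is below +oo because
   θ ∈ Θ ⊆ Θ*, and it equals V_δ(θ), which is not -oo.  Two extended-real
   functions continuous at θ with the same finite value there have a difference
   that stays below ε_a on a neighbourhood of θ, and ε_a is below the tolerance
   max{ε_a, ε_r V*}. *)

Section Norm2.
Context {R : realType} {p : nat}.

Lemma normr_le_norm2 (v : 'rV[R]_p) : `|v| <= norm2 v.
Proof.
have sqr_sum_ge0 : 0 <= \sum_(i < p) v 0 i ^+ 2 by apply: sumr_ge0 => i _; exact: sqr_ge0.
rewrite [`|v|]mx_normrE; apply/bigmax_leP; split=> [|[a i] _ /=].
  by rewrite sqrtr_ge0.
rewrite (ord1 a) /norm2 -sqrtr_sqr ler_sqrt // (bigD1 i) //= lerDl.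
by apply: sumr_ge0 => j _; exact: sqr_ge0.
Qed.

Lemma near_norm2 {x : 'rV[R]_p} {P : 'rV[R]_p -> Prop} :
  (\forall y \near x, P y) ->
  exists2 γ : R, 0 < γ & forall y, norm2 (y - x) <= γ -> P y.
Proof.
move/nbhs_normP => [e /= e0 Pe]; exists (e / 2) => [|y yx]; first by rewrite divr_gt0.
apply: Pe => /=; rewrite -normrN opprB; apply: le_lt_trans (normr_le_norm2 _) _.
by apply: le_lt_trans yx _; rewrite ltr_pdivrMr // ltr_pMr // ltr1n.
Qed.

End Norm2.

Lemma near_sube_le {R : realType} {T : topologicalType} {u v : T -> \bar R}
    {x : T} {e : R} :
  0 < e -> {for x, continuous u} -> {for x, continuous v} ->
  u x = v x -> u x \is a fin_num ->
  \forall y \near x, (u y - v y <= e%:E)%E.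
Proof.
move=> e0 cu cv uv ufin; have ur : u x = (fine (u x))%:E by rewrite fineK.
have /fine_cvgP[ufin_near fu] : u y @[y --> x] --> (fine (u x))%:E by rewrite -ur.
have /fine_cvgP[vfin_near fv] : v y @[y --> x] --> (fine (u x))%:E
  by rewrite -ur uv.
have fuv : fine (u y) - fine (v y) @[y --> x] --> 0.
  by rewrite -(subrr (fine (u x))); exact: cvgB.
near=> y.
have uv_lt : fine (u y) - fine (v y) < e by near: y; exact: cvgr_lt fuv _ e0.
rewrite -(fineK (_ : u y \is a fin_num)); last by near: y.
rewrite -(fineK (_ : v y \is a fin_num)); last by near: y.
by rewrite -EFinB lee_fin ltW.
Unshelve. all: end_near.
Qed.

Lemma Vstar_lt_pinfty (R : realType) (p n m l d : nat)
    (f : 'rV[R]_p -> 'rV[R]_n -> 'rV[R]_m -> R)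
    (g : 'rV[R]_p -> 'rV[R]_n -> 'rV[R]_m -> 'rV[R]_l)
    (h : 'rV[R]_p -> 'rV[R]_n -> 'rV[R]_m -> 'rV[R]_d)
    (K : set 'rV[R]_d) (θ : 'rV[R]_p) :
  Theta_star g h K θ -> (Vstar f g h K θ < +oo)%E.
Proof.
move=> [δ bδ [x fx]]; apply: (@le_lt_trans _ _ (f θ x δ)%:E); last by rewrite ltry.
apply: le_trans (ereal_inf_lbound _) _; first by exists δ.
by apply: ereal_inf_lbound; exists x.
Qed.

Theorem proposition2 (R : realType) (p n m d l : nat)
  (hp : (0 < p)%N) (hn : (0 < n)%N) (hm : (0 < m)%N) (hd : (0 < d)%N) (hl : (0 < l)%N)
  (K : set 'rV[R]_d) (hK : convex_cone K)
  (f : 'rV[R]_p -> 'rV[R]_n -> 'rV[R]_m -> R)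
  (g : 'rV[R]_p -> 'rV[R]_n -> 'rV[R]_m -> 'rV[R]_l)
  (h : 'rV[R]_p -> 'rV[R]_n -> 'rV[R]_m -> 'rV[R]_d)
  (hf : jointly_convex f) (hg : jointly_affine g) (hh : jointly_affine h)
  (hfin : forall (δ : 'rV[R]_m) (θ : 'rV[R]_p),
      binvec δ -> Vdelta f g h K δ θ != -oo%E)
  (Θ : set 'rV[R]_p) (hpoly : polytope Θ) (hfull : full_dimensional Θ)
  (hsub : Θ `<=` Theta_star g h K)
  (eps_a eps_r : R) (ha : 0 < eps_a) (hr : 0 <= eps_r)
  (θ : 'rV[R]_p) (hθ : interior Θ θ)
  (hV : {for θ, continuous (Vstar f g h K)})
  (δ : 'rV[R]_m) (hδ : Delta g h K Θ δ)
  (heq : Vdelta f g h K δ θ = Vstar f g h K θ)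
  (hVd : {for θ, continuous (Vdelta f g h K δ)}) :
  exists γ : R, 0 < γ /\
    forall θ' : 'rV[R]_p, norm2 (θ' - θ) <= γ ->
      (Vdelta f g h K δ θ' - Vstar f g h K θ'
         <= maxe eps_a%:E (eps_r%:E * Vstar f g h K θ'))%E.
Proof.
have Vs_lt : (Vstar f g h K θ < +oo)%E.
  by apply/Vstar_lt_pinfty/hsub; exact: interior_subset.
have Vd_fin : Vdelta f g h K δ θ \is a fin_num.
  by rewrite fin_numE (hfin _ _ hδ.1) /= heq lt_eqF.
have [γ γ0 Hγ] := near_norm2 (near_sube_le ha hVd hV heq Vd_fin).
exists γ; split=> // θ' /Hγ Vθ'.
by apply: le_trans Vθ' _; rewrite le_max lexx.
Qed.
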